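(* Let $\mathbf G$ be a finite group with a subgroup sequence $\{I\}=\mathbf G_0<\mathbf G_1<\cdots<\mathbf G_m=\mathbf G$, generating sets $X_{\mathbf G_k}$ of $\mathbf G_k$, and coset leader sets $\operatorname{CL}(\mathbf G_k/\mathbf G_{k-1})$, such that the Error Control Property holds for every consecutive pair $\mathbf G_{k-1}<\mathbf G_k$ (with respect to $X_{\mathbf G_{k-1}}$, $X_{\mathbf G_k}$ and $\operatorname{CL}(\mathbf G_k/\mathbf G_{k-1})$). Let $g\in\mathbf G$ have canonical form $g=c_m\cdots c_1$ with $c_k\in\operatorname{CL}(\mathbf G_k/\mathbf G_{k-1})$. Then for any $b\in X_{\mathbf G}\cup X_{\mathbf G}^{-1}$, the canonical form $bg=c'_m\cdots c'_1$ ($c'_k\in\operatorname{CL}(\mathbf G_k/\mathbf G_{k-1})$) satisfies $c'_i=c_i$ for all but one index $i$; moreover, for that single index $j$ with $c'_j\neq c_j$, the vertex $c'_j$ is adjacent to $c_j$ in the coset leader graph for $\mathbf G_j$ over $\mathbf G_{j-1}$.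
   Context: $\operatorname{CL}(\mathbf G_k/\mathbf G_{k-1})$ is a set of representatives of the left cosets of $\mathbf G_{k-1}$ in $\mathbf G_k$ containing $I$; every $g\in\mathbf G$ is uniquely $c_m\cdots c_1$ with $c_k\in\operatorname{CL}(\mathbf G_k/\mathbf G_{k-1})$ (canonical form). For a set $X$, $X^{-1}=\{a^{-1}:a\in X\}$. Error Control Property for subgroups $H<K$, coset leaders $\operatorname{CL}(K/H)$ and generating sets $X_H$, $X_K$: for all $b\in X_K\cup X_K^{-1}$ and $c\in\operatorname{CL}(K/H)$, either $bc\in\operatorname{CL}(K/H)$ or $c^{-1}bc\in X_H\cup X_H^{-1}$. The coset leader graph for $K$ over $H$ (with respect to $X_K$) has vertex set $\operatorname{CL}(K/H)$ and a directed edge labelled $a$ from $c$ to $d$ whenever $c=ad$ with $a\in X_K$; two vertices are adjacent if joined by an edge in either direction. *)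

From mathcomp Require Import all_boot all_fingroup.
Set Implicit Arguments. Unset Strict Implicit. Unset Printing Implicit Defensive.
Local Open Scope group_scope.

Section Defs.
Variable gT : finGroupType.

Definition coset_leaders (H K C : {set gT}) : Prop :=
  [/\ C \subset K, (1 : gT) \in C &
      forall x, x \in K -> exists! c, c \in C /\ x \in c *: H].

Definition error_control (XH XK CL : {set gT}) : Prop :=
  forall b c, b \in XK :|: XK^-1 -> c \in CL ->
    (b * c \in CL) \/ (c^-1 * b * c \in XH :|: XH^-1).

Definition cl_adjacent (X CL : {set gT}) (c d : gT) : Prop :=
  [/\ c \in CL, d \in CL & exists2 a, a \in X & (c = a * d \/ d = a * c)].

(* the product c_m * ... * c_1 *)
Definition canon_prod (m : nat) (c : nat -> gT) : gT :=
  \prod_(i < m) c (m - i)%N.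
End Defs.

From mathcomp Require Import all_boot all_fingroup.
Set Implicit Arguments. Unset Strict Implicit. Unset Printing Implicit Defensive.
Local Open Scope group_scope.

(* By the Error Control Property, a generator b of
   G_k either turns the top leader c_k into the leader b c_k (adjacent to c_k,
   the rest untouched), or it can be pushed past c_k as the generator
   c_k^-1 b c_k of G_(k-1), which then acts on c_(k-1) ... c_1 in the same way.
   Uniqueness of canonical forms identifies the product so obtained with the
   canonical form of b g. *)

Lemma canon_prodS (gT : finGroupType) n (f : nat -> gT) :
  canon_prod n.+1 f = f n.+1 * canon_prod n f.
Proof. by rewrite /canon_prod big_ord_recl subn0. Qed.

Lemma eq_canon_prod (gT : finGroupType) n (f h : nat -> gT) :
  (forall i, (1 <= i <= n)%N -> f i = h i) -> canon_prod n f = canon_prod n h.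
Proof.
elim: n => [|n IHn] efh; first by rewrite /canon_prod !big_ord0.
rewrite !canon_prodS efh ?leqnn // IHn // => i /andP[i_gt0 le_in].
by rewrite efh // i_gt0 ltnW.
Qed.

Lemma mem_gen_sym (gT : finGroupType) (X : {set gT}) b :
  b \in X :|: X^-1 -> b \in <<X>>.
Proof.
by case/setUP=> [Xb|]; [exact: mem_gen | rewrite inE -groupV; apply: mem_gen].
Qed.

Lemma cl_adjacent_mul (gT : finGroupType) (X CL : {set gT}) b c :
  b \in X :|: X^-1 -> c \in CL -> b * c \in CL -> cl_adjacent X CL c (b * c).
Proof.
move=> Xb CLc CLbc; split=> //.
case/setUP: Xb => Xb; first by exists b => //; right.
by exists b^-1; [rewrite -mem_invg | left; rewrite mulKg].
Qed.

Definition replace_at (gT : finGroupType) (f : nat -> gT) j d i :=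
  if i == j then d else f i.

Section CosetLeaderChain.

Variables (gT : finGroupType) (m : nat).
Variables (Gs : nat -> {group gT}) (X CL : nat -> {set gT}).
Hypothesis HG0 : Gs 0%N = 1 :> {set gT}.
Hypothesis Hchain : forall k, (1 <= k <= m)%N -> Gs k.-1 \proper Gs k.
Hypothesis HX : forall k, (k <= m)%N -> <<X k>> = Gs k.
Hypothesis HCL : forall k, (1 <= k <= m)%N -> coset_leaders (Gs k.-1) (Gs k) (CL k).
Hypothesis HECP : forall k, (1 <= k <= m)%N -> error_control (X k.-1) (X k) (CL k).

Definition leader_seq n (f : nat -> gT) :=
  forall i, (1 <= i <= n)%N -> f i \in CL i.

Lemma leader_seqS n f : leader_seq n.+1 f -> leader_seq n f.
Proof. by move=> Lf i /andP[i_gt0 le_in]; rewrite Lf // i_gt0 ltnW. Qed.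

Lemma canon_prod_mem n f : (n <= m)%N -> leader_seq n f -> canon_prod n f \in Gs n.
Proof.
elim: n f => [|n IHn] f le_nm Lf; first by rewrite /canon_prod big_ord0 group1.
have [sCLG _ _] := @HCL n.+1 le_nm.
rewrite canon_prodS groupM //; first exact: (subsetP sCLG _ (Lf n.+1 (leqnn _))).
apply: (subsetP (proper_sub (@Hchain n.+1 le_nm))).
exact: IHn f (ltnW le_nm) (leader_seqS Lf).
Qed.

Lemma canon_prod_inj n f h : (n <= m)%N -> leader_seq n f -> leader_seq n h ->
  canon_prod n f = canon_prod n h -> forall i, (1 <= i <= n)%N -> f i = h i.
Proof.
elim: n f h => [|n IHn] f h le_nm Lf Lh efh i; first by case/andP=> /leq_trans/[apply].
have [_ _ /(_ _ (canon_prod_mem le_nm Lf))[c0 [_ uniq_c0]]] := @HCL n.+1 le_nm.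
have lead_top k : leader_seq n.+1 k -> canon_prod n.+1 k = canon_prod n.+1 f ->
    c0 = k n.+1.
  move=> Lk ekf; apply: uniq_c0; split; first exact: Lk n.+1 (leqnn _).
  rewrite -ekf canon_prodS mem_lcoset mulKg.
  exact: canon_prod_mem (ltnW le_nm) (leader_seqS Lk).
have etop : f n.+1 = h n.+1 by rewrite -(lead_top f) // -(lead_top h).
move: efh; rewrite !canon_prodS etop => /mulgI efh.
case/andP=> i_gt0; rewrite leq_eqVlt => /orP[/eqP -> // | lt_in].
by rewrite (IHn f h (ltnW le_nm) (leader_seqS Lf) (leader_seqS Lh) efh) // i_gt0.
Qed.

(* [j = 0] encodes "no leader changes": index 0 lies outside the range 1..n. *)
Lemma error_control_chain n c b : (n <= m)%N -> leader_seq n c ->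
    b \in X n :|: (X n)^-1 ->
  exists j d, [/\ (j <= n)%N, b * canon_prod n c = canon_prod n (replace_at c j d) &
    ((1 <= j)%N -> d \in CL j /\ (d = c j \/ cl_adjacent (X j) (CL j) (c j) d))].
Proof.
elim: n b => [|n IHn] b le_nm Lc Xb.
  have : b \in Gs 0%N by rewrite -HX // mem_gen_sym.
  by rewrite HG0 => /set1P->; exists 0%N, (c 0%N); rewrite mul1g.
have CLc := Lc n.+1 (leqnn _).
have [CLbc | Xcbc] := @HECP n.+1 le_nm _ _ Xb CLc.
  exists n.+1, (b * c n.+1); split=> //.
    2: by move=> _; split=> //; right; apply: cl_adjacent_mul.
  rewrite !canon_prodS mulgA /replace_at eqxx; congr (_ * _).
  apply: eq_canon_prod => i /andP[_ le_in].
  by rewrite (ltn_eqF (leq_ltn_trans le_in (ltnSn n))).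
have [j [d [le_jn ebc Ld]]] := IHn _ (ltnW le_nm) (leader_seqS Lc) Xcbc.
exists j, d; split=> //; first exact: leqW.
rewrite !canon_prodS.
have -> : replace_at c j d n.+1 = c n.+1 by rewrite /replace_at gtn_eqF.
by rewrite -ebc !mulgA mulgV mul1g.
Qed.

End CosetLeaderChain.

Theorem mainTheorem7 (gT : finGroupType) (m : nat)
  (Gs : nat -> {group gT}) (X CL : nat -> {set gT})
  (HG0 : Gs 0%N = 1 :> {set gT})
  (Hchain : forall k, (1 <= k <= m)%N -> Gs k.-1 \proper Gs k)
  (HX : forall k, (k <= m)%N -> <<X k>> = Gs k)
  (HCL : forall k, (1 <= k <= m)%N -> coset_leaders (Gs k.-1) (Gs k) (CL k))
  (HECP : forall k, (1 <= k <= m)%N -> error_control (X k.-1) (X k) (CL k))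
  (g : gT) (c : nat -> gT)
  (Hc : forall k, (1 <= k <= m)%N -> c k \in CL k)
  (Hg : g = canon_prod m c)
  (b : gT) (Hb : b \in X m :|: (X m)^-1)
  (c' : nat -> gT)
  (Hc' : forall k, (1 <= k <= m)%N -> c' k \in CL k)
  (Hbg : b * g = canon_prod m c') :
  (exists j, forall i, (1 <= i <= m)%N -> i != j -> c' i = c i) /\
  (forall j, (1 <= j <= m)%N -> c' j != c j -> cl_adjacent (X j) (CL j) (c j) (c' j)).
Proof.
rewrite {}Hg in Hbg.
have [j [d [_ ebg Ld]]] := error_control_chain HG0 HX HECP (leqnn m) Hc Hb.
have Lcd : leader_seq CL m (replace_at c j d).
  move=> i /andP[i_gt0 le_im]; rewrite /replace_at; case: eqP => [ij | _].
    by subst i; case: (Ld i_gt0).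
  by rewrite Hc // i_gt0.
have ec' := canon_prod_inj Hchain HCL (leqnn m) Lcd Hc' (etrans (esym ebg) Hbg).
split; first by exists j => i Ii neq_ij; rewrite -ec' // /replace_at (negbTE neq_ij).
move=> k Ik; rewrite -ec' // /replace_at.
have [ekj | _] := eqVneq k j; last by rewrite eqxx.
subst k; case/andP: Ik => j_gt0 _.
by have [_ [-> | //]] := Ld j_gt0; rewrite eqxx.
Qed.
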